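(* Let $S$ be a finite semigroup. The following are equivalent: (i) $\mathbb{N}\times S$ has only countably many subsemigroups; (ii) $\mathbb{N}\times S$ has only countably many pairwise non-isomorphic subsemigroups; (iii) $S$ is a union of groups (i.e. every element of $S$ lies in some subgroup of $S$).
   Context: $\mathbb{N}=\{1,2,3,\dots\}$ is the free monogenic semigroup (positive integers under addition); $\mathbb{N}\times S$ is the direct product with componentwise operation. *)

From mathcomp Require Import all_boot.
Set Implicit Arguments. Unset Strict Implicit. Unset Printing Implicit Defensive.

Section NS.
Variables (S : finType) (op : S -> S -> S).

(* N x S, with N = {1,2,...} represented inside nat * S by requiring the first
   component to be >= 1; the operation is componentwise (addition on N, op on S). *)
Definition NSmul (x y : nat * S) : nat * S := (x.1 + y.1, op x.2 y.2).

Definition is_subsemigroup (A : nat * S -> Prop) : Prop :=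
  (forall x, A x -> 0 < x.1) /\
  (exists x, A x) /\
  (forall x y, A x -> A y -> A (NSmul x y)).

Definition subsemigroup_iso (A B : nat * S -> Prop) : Prop :=
  exists (phi psi : nat * S -> nat * S),
    (forall x, A x -> B (phi x)) /\ (forall y, B y -> A (psi y)) /\
    (forall x, A x -> psi (phi x) = x) /\ (forall y, B y -> phi (psi y) = y) /\
    (forall x y, A x -> A y -> phi (NSmul x y) = NSmul (phi x) (phi y)).

Definition countably_many_subsemigroups : Prop :=
  exists f : nat -> (nat * S -> Prop),
    forall A, is_subsemigroup A -> exists n, forall x, A x <-> f n x.

Definition countably_many_subsemigroups_upto_iso : Prop :=
  exists f : nat -> (nat * S -> Prop),
    forall A, is_subsemigroup A ->
      exists n, is_subsemigroup (f n) /\ subsemigroup_iso A (f n).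

Definition is_subgroup (G : {set S}) : Prop :=
  (forall g h, g \in G -> h \in G -> op g h \in G) /\
  exists2 e, e \in G &
    (forall g, g \in G -> op e g = g /\ op g e = g) /\
    (forall g, g \in G -> exists2 h, h \in G & op g h = e /\ op h g = e).

Definition union_of_groups : Prop :=
  forall s : S, exists G : {set S}, is_subgroup G /\ s \in G.

End NS.

(* If every s lies in a subgroup then s^(k+2) = s for some k, so every fiber
   {n | (n, s) \in A} of a subsemigroup A of N x S is closed under adding some p > 0.
   Such a set of naturals is eventually periodic, hence described by a finite code,
   and A is determined by the finite family of the codes of its fibers.
   If s lies in no subgroup then s^(k+2) <> s for all k. For Z a set of naturals, let
   A_Z be generated by (1, s) and the (m + 2, s) with m in Z: its elements over s are
   exactly its generators, i.e. its indecomposable elements. An isomorphism A_Z ~ A_Z'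
   therefore maps generators to generators; as some power of s is idempotent it scales
   their first coordinates by a constant, which must be 1, so Z = Z'. A diagonal
   argument then rules out a countable list of representatives. *)

From mathcomp Require Import all_boot zify boolp.
Set Implicit Arguments. Unset Strict Implicit. Unset Printing Implicit Defensive.

Section Powers.
Variables (T : Type) (mul : T -> T -> T).

(* [spow x k] is x^(k+1); shifting the exponent avoids a meaningless 0th power. *)
Definition spow (x : T) (k : nat) : T := iter k (mul x) x.

Lemma spowS x k : spow x k.+1 = mul x (spow x k).
Proof. by []. Qed.

Lemma spowDl x m n : spow x (n + m) = iter n (mul x) (spow x m).
Proof. exact: iterD. Qed.

Lemma spow_closed (A : T -> Prop) x k :
  (forall x y, A x -> A y -> A (mul x y)) -> A x -> A (spow x k).
Proof. by move=> A_mul Ax; elim: k => [|k IH] //; apply: A_mul. Qed.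

Lemma spowD (mulA : associative mul) x m n :
  mul (spow x m) (spow x n) = spow x (m + n).+1.
Proof. by elim: m => [|m IH] //; rewrite spowS -mulA IH addSn. Qed.

End Powers.

Lemma spow_morph (T T' : Type) (mul : T -> T -> T) (mul' : T' -> T' -> T')
    (A : T -> Prop) (f : T -> T') x k :
  (forall x y, A x -> A y -> A (mul x y)) ->
  (forall x y, A x -> A y -> f (mul x y) = mul' (f x) (f y)) ->
  A x -> f (spow mul x k) = spow mul' (f x) k.
Proof.
move=> A_mul fM Ax; elim: k => [|k IH] //.
by rewrite !spowS fM ?IH //; apply: spow_closed.
Qed.

Section FinitePowers.
Variables (S : finType) (op : S -> S -> S).

Lemma spow_periodic s : exists i d, 0 < d /\
  forall m l, i <= m -> spow op s (m + l * d) = spow op s m.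
Proof.
have /injectivePn [i [j ne_ij eq_ij]] : ~~ injectiveb (fun i : 'I_#|S|.+1 => spow op s i).
  by apply/injectiveP => /leq_card; rewrite card_ord ltnn.
wlog lt_ij : i j {ne_ij} eq_ij / i < j.
  move=> W; case: (ltngtP i j) => [|/W|/val_inj eij]; [exact: W | by apply | ].
  by rewrite eij eqxx in ne_ij.
exists i, (j - i); split; first by rewrite subn_gt0.
have period l : spow op s (i + l * (j - i)) = spow op s i.
  elim: l => [|l IH]; first by rewrite addn0.
  have -> : i + l.+1 * (j - i) = l * (j - i) + j by lia.
  by rewrite spowDl /= -eq_ij -spowDl addnC.
move=> m l le_im.
by rewrite -(subnK le_im) -addnA !(spowDl _ _ _ (m - i)) period.
Qed.

(* s^((x+1)(K+1)) = s^(K+1); in particular s^(K+1) is idempotent. *)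
Lemma spow_idempotent s : exists K, forall x, spow op s (x * K.+1 + K) = spow op s K.
Proof.
have [i [d [d_gt0 period]]] := spow_periodic s.
have [K defK] : exists K, K.+1 = i.+1 * d by exists (i.+1 * d).-1; rewrite prednK ?muln_gt0.
exists K => x; rewrite defK addnC mulnA [x * _]mulnC.
by apply: period; rewrite -ltnS defK leq_pmulr.
Qed.

End FinitePowers.

Section Subgroups.
Variables (S : finType) (op : S -> S -> S).
Hypothesis opA : associative op.

Lemma subgroup_spow_fix (G : {set S}) s :
  is_subgroup op G -> s \in G -> exists k, spow op s k.+1 = s.
Proof.
move=> [mulG [e eG [unitG invG]]] sG.
have [K idemK] := spow_idempotent op s.
have xG : spow op s K \in G by apply: (@spow_closed _ _ (fun g => g \in G)).
have xx : op (spow op s K) (spow op s K) = spow op s K.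
  by rewrite spowD // -[RHS](idemK 1) mul1n addSn.
have xe : spow op s K = e.
  have [h hG [_ hx]] := invG _ xG.
  by rewrite -(unitG _ xG).1 -hx -opA xx.
by exists K; rewrite spowS xe (unitG s sG).2.
Qed.

Lemma spow_fix_subgroup s k : spow op s k.+1 = s ->
  is_subgroup op [set spow op s j | j : 'I_k.+1] /\ s \in [set spow op s j | j : 'I_k.+1].
Proof.
move=> fix_s; set G := [set _ | _ : 'I_k.+1].
have period n : spow op s (n + k.+1) = spow op s n by rewrite spowDl fix_s.
have spowG n : spow op s n \in G.
  elim/ltn_ind: n => n IH; case: (ltnP n k.+1) => [lt_nk | le_kn].
    by apply/imsetP; exists (Ordinal lt_nk).
  by rewrite -(subnK le_kn) period IH // -subn_gt0 subKn.
have memG g : g \in G -> exists2 j, j < k.+1 & g = spow op s j.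
  by move=> /imsetP [j _ ->]; exists j.
split; last exact: (spowG 0).
split; first by move=> _ _ /memG [a _ ->] /memG [b _ ->]; rewrite spowD.
exists (spow op s k); first exact: spowG.
split=> _ /memG [a lt_ak ->].
  by rewrite !spowD // -addSn addnC period -addnS period.
exists (spow op s (k - a + k)); first exact: spowG.
rewrite !spowD //.
have -> : (a + (k - a + k)).+1 = k + k.+1 by lia.
have -> : (k - a + k + a).+1 = k + k.+1 by lia.
by rewrite period.
Qed.

Lemma union_of_groupsP :
  union_of_groups op <-> forall s, exists k, spow op s k.+1 = s.
Proof.
split=> [groups s | fix_spow s].
  by have [G [HG sG]] := groups s; apply: subgroup_spow_fix HG sG.
by have [k /spow_fix_subgroup] := fix_spow s; exists [set spow op s j | j : 'I_k.+1].
Qed.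

End Subgroups.

Section AddClosedSets.
Variables (X : nat -> Prop) (p : nat).
Hypotheses (p_gt0 : 0 < p) (addp_closed : forall n, X n -> X (n + p)).

Lemma add_closed_mul n k : X n -> X (n + k * p).
Proof.
move=> Xn; elim: k => [|k IH]; first by rewrite addn0.
by rewrite mulSnr addnA; apply: addp_closed.
Qed.

Lemma add_closed_eventually_periodic :
  exists N, forall n, N <= n -> X (n + p) -> X n.
Proof.
have threshold (r : 'I_p) : exists b, forall n, b <= n -> n %% p = r -> X (n + p) -> X n.
  have [[m [Xm mr]] | noX] := pselect (exists m, X m /\ m %% p = r).
    exists m => n le_mn nr _.
    have /dvdnP [k defk] : p %| n - m by rewrite -eqn_mod_dvd // nr mr.
    by rewrite -(subnKC le_mn) defk; apply: add_closed_mul.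
  by exists 0 => n _ nr Xnp; case: noX; exists (n + p); rewrite modnDr.
have [b Hb] := fin_all_exists threshold.
exists (\max_(r < p) b r) => n le_Nn.
apply: (Hb (Ordinal (ltn_pmod n p_gt0))) => //.
exact: leq_trans (leq_bigmax _) le_Nn.
Qed.

End AddClosedSets.

Definition fold_period (p N n : nat) : nat := if n < N then n else N + (n - N) %% p.

Lemma fold_period_lt p N n : 0 < p -> fold_period p N n < N + p.
Proof.
move=> p_gt0; rewrite /fold_period; case: (ltnP n N) => [lt_nN | _]; first exact: ltn_addr.
by rewrite ltn_add2l ltn_pmod.
Qed.

Lemma fold_periodE (X : nat -> Prop) p N :
  (forall n, X n -> X (n + p)) -> (forall n, N <= n -> X (n + p) -> X n) ->
  forall n, X n <-> X (fold_period p N n).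
Proof.
move=> addp_closed addp_open.
have shift m k : N <= m -> X (m + k * p) -> X m.
  move=> le_Nm; elim: k => [|k IH]; first by rewrite addn0.
  rewrite mulSnr addnA => Xmkp; apply: IH; apply: addp_open Xmkp.
  exact: leq_trans le_Nm (leq_addr _ _).
move=> n; rewrite /fold_period; case: (ltnP n N) => [// | le_Nn].
have defn : n = N + (n - N) %% p + (n - N) %/ p * p.
  by rewrite -addnA [_ %% p + _]addnC -divn_eq subnKC.
split=> [Xn | Xfold]; last by rewrite defn; apply: add_closed_mul.
by rewrite defn in Xn; apply: shift Xn; apply: leq_addr.
Qed.

(* A code [(p, N, l)] describes the set whose indicator is [l] below [N + p] and is
   [p]-periodic from [N] on. *)
Definition periodic_code := (nat * nat * seq bool)%type.

Definition decode (c : periodic_code) (n : nat) : bool :=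
  nth false c.2 (fold_period c.1.1 c.1.2 n).

Lemma add_closed_decode (X : nat -> Prop) p : 0 < p -> (forall n, X n -> X (n + p)) ->
  exists c : periodic_code, forall n, X n <-> decode c n.
Proof.
move=> p_gt0 addp_closed.
have [N addp_open] := add_closed_eventually_periodic p_gt0 addp_closed.
exists (p, N, mkseq (fun i => `[< X i >]) (N + p)) => n.
rewrite /decode /= nth_mkseq ?fold_period_lt //.
by rewrite (fold_periodE addp_closed addp_open n); split=> /asboolP.
Qed.

Section DirectProduct.
Variables (S : finType) (op : S -> S -> S).

Lemma spow_NSmul a t k : spow (NSmul op) (a, t) k = (k.+1 * a, spow op t k).
Proof.
elim: k => [|k IH]; first by rewrite mul1n.
by rewrite spowS IH /NSmul /= mulSn.
Qed.

Lemma spow_NSmul_fst x k : (spow (NSmul op) x k).1 = k.+1 * x.1.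
Proof. by case: x => a t; rewrite spow_NSmul. Qed.

Lemma fiber_add_closed (A : nat * S -> Prop) s k :
  is_subsemigroup op A -> spow op s k.+1 = s ->
  exists2 p, 0 < p & forall n, A (n, s) -> A (n + p, s).
Proof.
move=> [A_pos [_ A_mul]] fix_s.
have [[n0 An0] | noA] := pselect (exists n0, A (n0, s)); last first.
  by exists 1 => // n An; case: noA; exists n.
exists (k.+1 * n0); first by rewrite muln_gt0 (A_pos _ An0).
move=> n An; rewrite -[in (_, s)]fix_s.
have := A_mul _ _ An (spow_closed k A_mul An0).
by rewrite spow_NSmul.
Qed.

Hypothesis opA : associative op.

Lemma union_of_groups_countable :
  union_of_groups op -> countably_many_subsemigroups op.
Proof.
move=> /(union_of_groupsP opA) fix_spow.
exists (fun m x => if @unpickle {ffun S -> periodic_code} m is Some F then decode (F x.2) x.1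
                 else false) => A subA.
have fiber_code s : exists c, forall n, A (n, s) <-> decode c n.
  have [k fix_s] := fix_spow s.
  have [p p_gt0 addp_closed] := fiber_add_closed subA fix_s.
  exact: add_closed_decode p_gt0 addp_closed.
have [F HF] := fin_all_exists fiber_code.
by exists (pickle [ffun s => F s]) => -[n s]; rewrite pickleK ffunE.
Qed.

End DirectProduct.

Section Isomorphisms.
Variables (S : finType) (op : S -> S -> S).

Definition subsemigroup_iso_by (A B : nat * S -> Prop) (phi psi : nat * S -> nat * S) :=
  (forall x, A x -> B (phi x)) /\ (forall y, B y -> A (psi y)) /\
  (forall x, A x -> psi (phi x) = x) /\ (forall y, B y -> phi (psi y) = y) /\
  (forall x y, A x -> A y -> phi (NSmul op x y) = NSmul op (phi x) (phi y)).

Lemma subsemigroup_iso_by_sym A B phi psi :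
  (forall x y, A x -> A y -> A (NSmul op x y)) ->
  subsemigroup_iso_by A B phi psi -> subsemigroup_iso_by B A psi phi.
Proof.
move=> A_mul [AB [BA [psiK [phiK phiM]]]].
split=> //; split=> //; split=> //; split=> // x y Bx By.
have [Apsix Apsiy] := (BA x Bx, BA y By).
by rewrite -{1}(phiK x Bx) -{1}(phiK y By) -phiM ?psiK //; apply: A_mul.
Qed.

Lemma subsemigroup_iso_sym A B :
  (forall x y, A x -> A y -> A (NSmul op x y)) ->
  subsemigroup_iso op A B -> subsemigroup_iso op B A.
Proof.
by move=> A_mul [phi [psi iso]]; exists psi, phi; apply: subsemigroup_iso_by_sym.
Qed.

Lemma subsemigroup_iso_trans A B C :
  subsemigroup_iso op A B -> subsemigroup_iso op B C -> subsemigroup_iso op A C.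
Proof.
move=> [phi [psi [AB [BA [psiK [phiK phiM]]]]]].
move=> [phi' [psi' [BC [CB [psiK' [phiK' phiM']]]]]].
exists (phi' \o phi), (psi \o psi'); split; [|split; [|split; [|split]]] => /=.
- by move=> x Ax; apply/BC/AB.
- by move=> z Cz; apply/BA/CB.
- by move=> x Ax; rewrite psiK' ?psiK //; apply: AB.
- by move=> z Cz; rewrite phiK ?phiK' //; apply: CB.
- by move=> x y Ax Ay; rewrite phiM // phiM' //; apply: AB.
Qed.

Lemma subsemigroup_iso_ext A B : is_subsemigroup op A -> (forall x, A x <-> B x) ->
  is_subsemigroup op B /\ subsemigroup_iso op A B.
Proof.
move=> [A_pos [[x Ax] A_mul]] AB; split; last first.
  by exists id, id; split; [|split; [|split]] => // ? /AB.
split; first by move=> y /AB /A_pos.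
by split=> [|y z /AB Ay /AB Az]; [exists x; apply/AB | apply/AB/A_mul].
Qed.

End Isomorphisms.

Section Generated.
Variables (S : finType) (op : S -> S -> S) (s : S) (X : nat -> Prop).

Inductive generated : nat * S -> Prop :=
  | generated_gen n : X n -> generated (n, s)
  | generated_mul u v : generated u -> generated v -> generated (NSmul op u v).

Lemma generated_subsemigroup :
  (forall n, X n -> 0 < n) -> (exists n, X n) -> is_subsemigroup op generated.
Proof.
move=> X_pos [n Xn]; split.
  by move=> x; elim=> [m /X_pos // | u v _ u_pos _ v_pos]; rewrite addn_gt0 u_pos.
by split; [exists (n, s); apply: generated_gen | apply: generated_mul].
Qed.

Lemma generated_inv x : generated x ->
  x.2 = s \/ exists u v, [/\ generated u, generated v & x = NSmul op u v].
Proof. by case=> [n _ | u v gu gv]; [left | right; exists u, v]. Qed.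

Hypothesis opA : associative op.

Lemma generated_snd x : generated x -> exists k, x.2 = spow op s k.
Proof.
elim=> [n _ | u v _ [a ua] _ [b vb]]; first by exists 0.
by exists (a + b).+1; rewrite /= ua vb spowD.
Qed.

Hypothesis s_aperiodic : forall k, spow op s k.+1 <> s.

Lemma generated_mul_snd u v : generated u -> generated v -> (NSmul op u v).2 <> s.
Proof.
by move=> /generated_snd [a ua] /generated_snd [b vb]; rewrite /= ua vb spowD.
Qed.

Lemma generated_fiber x : generated x -> x.2 = s -> X x.1.
Proof. by case=> [// | u v gu gv /(generated_mul_snd gu gv)]. Qed.

End Generated.

Arguments generated_gen [S op s X n].

Section AperiodicGenerator.
Variables (S : finType) (op : S -> S -> S) (s : S).
Hypotheses (opA : associative op) (s_aperiodic : forall k, spow op s k.+1 <> s).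

Section Iso.
Variables (X Y : nat -> Prop) (phi psi : nat * S -> nat * S).
Hypothesis iso : subsemigroup_iso_by op (generated op s X) (generated op s Y) phi psi.

Lemma iso_generated_snd a : X a -> (phi (a, s)).2 = s.
Proof.
move=> Xa; have [XY [YX [psiK [phiK phiM]]]] := iso.
have [_ [_ [_ [_ psiM]]]] := subsemigroup_iso_by_sym (@generated_mul _ _ _ _) iso.
case: (generated_inv (XY _ (generated_gen Xa))) => [// | [u [v [gu gv phi_uv]]]].
have: (NSmul op (psi u) (psi v)).2 = s.
  by rewrite -psiM // -phi_uv psiK //; apply: generated_gen.
by move/(generated_mul_snd opA s_aperiodic (YX _ gu) (YX _ gv)).
Qed.

Lemma iso_generated_scale a : X 1 -> X a.+1 -> (phi (a.+1, s)).1 = a.+1 * (phi (1, s)).1.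
Proof.
move=> X1 Xa; have [_ [_ [_ [_ phiM]]]] := iso.
have [K idemK] := spow_idempotent op s.
have E : spow (NSmul op) (a.+1, s) K = spow (NSmul op) (1, s) (a * K.+1 + K).
  by rewrite !spow_NSmul idemK muln1; congr pair; lia.
have gen1 : generated op s X (1, s) by apply: generated_gen.
have gena : generated op s X (a.+1, s) by apply: generated_gen.
have := congr1 (fun x => (phi x).1) E.
rewrite /= !(spow_morph _ (@generated_mul _ _ _ _) phiM) //.
rewrite !spow_NSmul_fst (_ : (a * K.+1 + K).+1 = K.+1 * a.+1) -?mulnA; last by lia.
by move/eqP; rewrite eqn_pmul2l // => /eqP.
Qed.

End Iso.

Lemma generated_iso_sub X Y :
  (forall n, X n -> 0 < n) -> (forall n, Y n -> 0 < n) -> X 1 -> Y 1 ->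
  subsemigroup_iso op (generated op s X) (generated op s Y) -> forall a, X a -> Y a.
Proof.
move=> X_pos Y_pos X1 Y1 [phi [psi iso]].
have iso' := subsemigroup_iso_by_sym (@generated_mul _ _ _ _) iso.
have [XY [_ [psiK _]]] := iso.
have phi_s a : X a -> phi (a, s) = ((phi (a, s)).1, s).
  by move=> Xa; rewrite [LHS]surjective_pairing (iso_generated_snd iso Xa).
have Y_fiber a : X a -> Y (phi (a, s)).1.
  move=> Xa; have gphi := XY _ (generated_gen Xa).
  exact: (generated_fiber opA s_aperiodic gphi (iso_generated_snd iso Xa)).
have phi1 : (phi (1, s)).1 = 1.
  move: (Y_fiber 1 X1) (psiK _ (generated_gen X1)); rewrite phi_s //.
  case: (phi (1, s)).1 => [/Y_pos // | c Yc].
  rewrite [psi _]surjective_pairing (iso_generated_scale iso' Y1 Yc).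
  by case=> /eqP; rewrite muln_eq1 => /andP [/eqP ->].
move=> [|a] Xa; first by have := X_pos _ Xa.
by have := Y_fiber _ Xa; rewrite (iso_generated_scale iso X1 Xa) phi1 muln1.
Qed.

End AperiodicGenerator.

Section Countability.
Variables (S : finType) (op : S -> S -> S).
Hypothesis opA : associative op.

Lemma countable_countable_upto_iso :
  countably_many_subsemigroups op -> countably_many_subsemigroups_upto_iso op.
Proof.
move=> [f Hf]; exists f => A subA.
by have [n /(subsemigroup_iso_ext subA)] := Hf A subA; exists n.
Qed.

Lemma countable_upto_iso_union_of_groups :
  countably_many_subsemigroups_upto_iso op -> union_of_groups op.
Proof.
move=> [f Hf]; apply/(union_of_groupsP opA) => s.
have [// | no_fix] := pselect (exists k, spow op s k.+1 = s); exfalso.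
have s_aperiodic k : spow op s k.+1 <> s by move=> fix_s; apply: no_fix; exists k.
(* [A Z] is generated by [(1, s)] and the [(m + 2, s)] with [m] in [Z] (the shift
   keeps the generator 1 apart); up to isomorphism it determines [Z], and [D] is
   Cantor's diagonal set for the enumeration [f]. *)
pose XZ (Z : nat -> Prop) n := n = 1 \/ exists2 m, Z m & n = m.+2.
have XZ_pos Z n : XZ Z n -> 0 < n by case=> [-> | [m _ ->]].
pose A Z := generated op s (XZ Z).
have A_sub Z : is_subsemigroup op (A Z).
  by apply: generated_subsemigroup (XZ_pos Z) _; exists 1; left.
have A_inj Z Z' : subsemigroup_iso op (A Z) (A Z') -> forall m, Z m -> Z' m.
  move=> iso m Zm.
  have XZm : XZ Z m.+2 by right; exists m.
  have XZ1 Z'' : XZ Z'' 1 by left.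
  by case: (generated_iso_sub opA s_aperiodic (XZ_pos Z) (XZ_pos Z') (XZ1 Z) (XZ1 Z') iso XZm)
    => [// | [m' Z'm' [->]]].
pose D n := exists Z, subsemigroup_iso op (A Z) (f n) /\ ~ Z n.
have [n [_ isoD]] := Hf (A D) (A_sub D).
have notDn : ~ D n.
  move=> Dn; have [Z [isoZ notZn]] := Dn; apply: notZn (A_inj D Z _ n Dn).
  exact: subsemigroup_iso_trans isoD (subsemigroup_iso_sym (@generated_mul _ _ _ _) isoZ).
exact: notDn (ex_intro _ D (conj isoD notDn)).
Qed.

End Countability.

Theorem theoremD (S : finType) (op : S -> S -> S) (Hassoc : associative op) :
  (countably_many_subsemigroups op <-> countably_many_subsemigroups_upto_iso op) /\
  (countably_many_subsemigroups_upto_iso op <-> union_of_groups op).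
Proof.
have iii_i := union_of_groups_countable Hassoc.
have ii_iii := countable_upto_iso_union_of_groups Hassoc.
have i_ii := @countable_countable_upto_iso S op.
split; split=> [H | H].
- exact: i_ii H.
- exact: iii_i (ii_iii H).
- exact: ii_iii H.
- exact: i_ii (iii_i H).
Qed.
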